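(* Let $q$ be a prime power, let $n\ge 2$ and $K\ge 1$ be fixed integers, and fix a receiver index $j\in\{1,\dots,n\}$. Let $\mathbf H[t_0],\mathbf H[t_1],\dots,\mathbf H[t_K]$ be independent random $n\times n$ matrices, each with entries drawn independently and uniformly from $\mathbb F_q\setminus\{0\}$. For each $s$ let $\mathbf h_j^{\mathrm{int}}[t_s]=(h_{j1}[t_s],\dots,h_{j\,j-1}[t_s],h_{j\,j+1}[t_s],\dots,h_{jn}[t_s])\in\mathbb F_q^{\,n-1}$ be the interference vector of receiver $j$ at time $t_s$. Then, conditional on the event that the vectors $\mathbf h_j^{\mathrm{int}}[t_0],\dots,\mathbf h_j^{\mathrm{int}}[t_K]$ are linearly dependent over $\mathbb F_q$, the probability that receiver $j$ can recover its message from $\mathbf H[t_0],\dots,\mathbf H[t_K]$ is $1-O(q^{-1})$ as $q\to\infty$.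
   Context: Receiver $j$ ''can recover its message from'' matrices $\mathbf M_0,\dots,\mathbf M_K\in\mathbb F_q^{n\times n}$ means: there exist scalars $\lambda_0,\dots,\lambda_K\in\mathbb F_q$ such that $\sum_{s=0}^K\lambda_s(\mathbf M_s)_{jj}\neq 0$ and $\sum_{s=0}^K\lambda_s(\mathbf M_s)_{ji}=0$ for every $i\neq j$ (equivalently $\sum_s \lambda_s\mathbf h_j^{\mathrm{int}}[t_s]=\mathbf 0$ while the corresponding combination of diagonal entries is nonzero). *)

From mathcomp Require Import all_boot all_order all_algebra.
Set Implicit Arguments. Unset Strict Implicit. Unset Printing Implicit Defensive.
Import Order.TTheory GRing.Theory Num.Theory.
Local Open Scope ring_scope.

Section Defs.
Variables (F : finFieldType) (n K : nat).

Definition chan := {ffun 'I_K.+1 -> 'M[F]_n}.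

(* Sample space: all entries of all matrices lie in F \ {0}.  Independent
   uniform entries = uniform distribution on this finite set. *)
Definition sample_space : {set chan} :=
  [set H : chan | [forall s, forall i, forall k, H s i k != 0]].

Definition h_int (j : 'I_n) (H : chan) (s : 'I_K.+1) : 'rV[F]_n.-1 :=
  col' j (row j (H s)).

Definition h_int_mx (j : 'I_n) (H : chan) : 'M[F]_(K.+1, n.-1) :=
  \matrix_(s < K.+1) h_int j H s.

Definition int_dependent (j : 'I_n) (H : chan) : bool :=
  ~~ row_free (h_int_mx j H).

Definition can_recover (j : 'I_n) (H : chan) : bool :=
  [exists lambda : {ffun 'I_K.+1 -> F},
    (\sum_(s < K.+1) lambda s * H s j j != 0) &&
    [forall i : 'I_n, (i != j) ==> (\sum_(s < K.+1) lambda s * H s j i == 0)]].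

Definition cond_prob_recover (j : 'I_n) : rat :=
  (#|[set H in sample_space | int_dependent j H && can_recover j H]|%:R /
   #|[set H in sample_space | int_dependent j H]|%:R).

End Defs.

From mathcomp Require Import all_boot all_order all_algebra.
From mathcomp Require Import zify.
Import Order.TTheory GRing.Theory Num.Theory.
Local Open Scope ring_scope.

Set Implicit Arguments. Unset Strict Implicit. Unset Printing Implicit Defensive.

(* Choose a nonzero vector [a] in the left kernel of the interference matrix
   [M] and an index [i0] with [a_i0 != 0], as functions of [M] alone.  If
   receiver [j] cannot recover, then [sum_s a_s H[t_s]_jj = 0], so the entry
   [H[t_i0]_jj] is determined by the others.  Overwriting that entry by any
   [c != 0] does not change [M], hence not [a] and [i0] either, so it is an
   injection from (bad channels) x (F \ 0) into the dependent channels.  Thus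
   [#bad * (q - 1) <= #dependent] and the failure probability is at most
   [1 / (q - 1) <= 2 / q]. *)

Section KernelWitness.
Variables (F : finFieldType) (m p : nat).

Definition kernel_witness (M : 'M[F]_(m, p)) : 'rV[F]_m :=
  odflt 0 [pick a : 'rV[F]_m | (a != 0) && (a *m M == 0)].

Lemma kernel_witnessP (M : 'M[F]_(m, p)) :
  ~~ row_free M -> kernel_witness M != 0 /\ kernel_witness M *m M = 0.
Proof.
rewrite -kermx_eq0 => /matrix0Pn [r [k kerM_rk]].
rewrite /kernel_witness; case: pickP => [a /andP [-> /eqP] //|no_witness].
have := no_witness (row r (kermx M)).
rewrite -row_mul mulmx_ker row0 eqxx andbT => /negbFE /eqP ker_r0.
move: kerM_rk; have := congr1 (fun v : 'rV[F]_m => v 0 k) ker_r0.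
by rewrite !mxE => ->; rewrite eqxx.
Qed.

End KernelWitness.

Definition support_index (F : fieldType) (m : nat) (a : 'rV[F]_m.+1) : 'I_m.+1 :=
  odflt ord0 [pick i | a 0 i != 0].

Lemma support_indexP (F : fieldType) (m : nat) (a : 'rV[F]_m.+1) :
  a != 0 -> a 0 (support_index a) != 0.
Proof.
move=> /matrix0Pn [r [k a_rk]]; rewrite /support_index.
by case: pickP => [i -> //|/(_ k)]; rewrite (ord1 r) in a_rk; rewrite a_rk.
Qed.

Lemma eq_at_of_eq_lincomb (F : idomainType) (m : nat) (a x y : 'I_m -> F) i0 :
  a i0 != 0 -> \sum_s a s * x s = \sum_s a s * y s ->
  (forall s, s != i0 -> x s = y s) -> x i0 = y i0.
Proof.
move=> a_i0 eq_sum eq_off; apply: (mulfI a_i0).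
apply: (@addIr _ (\sum_(s | s != i0) a s * y s)).
move: eq_sum; rewrite (bigD1 i0) //= [RHS](bigD1 i0) //=.
by rewrite (eq_bigr (fun s => a s * y s)) // => s /eq_off ->.
Qed.

Lemma ratio_le_two_over (R : realFieldType) (b d q : nat) :
  (0 < d)%N -> (2 <= q)%N -> (b * q.-1 <= d)%N ->
  (b%:R / d%:R : R) <= 2 / q%:R.
Proof.
move=> d_gt0 q_ge2 bound.
have bq : (b * q <= 2 * d)%N by nia.
rewrite ler_pdivrMr ?ltr0n // mulrAC ler_pdivlMr ?ltr0n; last by lia.
by rewrite -natrM -[2]/(2%:R) -natrM ler_nat.
Qed.

Section Receiver.
Variables (F : finFieldType) (n K : nat) (j : 'I_n).

Definition set_diag_entry (H : chan F n K) (i : 'I_K.+1) (c : F) : chan F n K :=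
  [ffun s => if s == i then
     \matrix_(a, b) (if (a == j) && (b == j) then c else H s a b) else H s].

Lemma set_diag_entry_diag H i c : set_diag_entry H i c i j j = c.
Proof. by rewrite ffunE eqxx mxE !eqxx. Qed.

Lemma set_diag_entry_off H i c s a b :
  [|| s != i, a != j | b != j] -> set_diag_entry H i c s a b = H s a b.
Proof.
rewrite ffunE; case: (s =P i) => //= _ off; rewrite mxE.
by case: (a =P j) off => //= _ /negbTE ->.
Qed.

Lemma h_int_mx_set_diag_entry H i c :
  h_int_mx j (set_diag_entry H i c) = h_int_mx j H.
Proof.
apply/matrixP => s k; rewrite !mxE set_diag_entry_off //.
by rewrite [lift j k == j]eq_sym neq_lift !orbT.
Qed.

Lemma mul_h_int_mx H (a : 'rV[F]_K.+1) k :
  (a *m h_int_mx j H) 0 k = \sum_s a 0 s * H s j (lift j k).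
Proof. by rewrite mxE; apply: eq_bigr => s _; rewrite !mxE. Qed.

Lemma can_recover_of_kernel H (a : 'rV[F]_K.+1) :
  a *m h_int_mx j H = 0 -> \sum_s a 0 s * H s j j != 0 -> can_recover j H.
Proof.
move=> a_ker a_diag; apply/existsP; exists [ffun s => a 0 s].
under eq_bigr do rewrite ffunE; rewrite a_diag /=.
apply/forallP => i; apply/implyP; case: (unliftP j i) => [k -> _|->]; last by rewrite eqxx.
by under eq_bigr do rewrite ffunE; rewrite -mul_h_int_mx a_ker mxE.
Qed.

Definition dep_coeffs (H : chan F n K) : 'rV[F]_K.+1 := kernel_witness (h_int_mx j H).
Definition pivot (H : chan F n K) : 'I_K.+1 := support_index (dep_coeffs H).

Definition dep_set : {set chan F n K} :=
  [set H in sample_space F n K | int_dependent j H].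
Definition bad_set : {set chan F n K} :=
  [set H in sample_space F n K | int_dependent j H && ~~ can_recover j H].

Lemma bad_diag_relation H : H \in bad_set ->
  \sum_s dep_coeffs H 0 s * H s j j = 0.
Proof.
rewrite inE => /andP [_ /andP [dep no_recover]].
have [_ a_ker] := kernel_witnessP dep.
by apply: contraNeq no_recover; apply: can_recover_of_kernel a_ker.
Qed.

Lemma pivot_coeff_neq0 H : H \in bad_set -> dep_coeffs H 0 (pivot H) != 0.
Proof.
by rewrite inE => /andP [_ /andP [dep _]]; apply/support_indexP/(kernel_witnessP dep).1.
Qed.

Definition reset_pivot (p : chan F n K * F) : chan F n K :=
  set_diag_entry p.1 (pivot p.1) p.2.

Lemma dep_coeffs_reset_pivot H c : dep_coeffs (reset_pivot (H, c)) = dep_coeffs H.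
Proof. by rewrite /dep_coeffs h_int_mx_set_diag_entry. Qed.

Lemma reset_pivot_inj :
  {in setX bad_set [set c : F | c != 0] &, injective reset_pivot}.
Proof.
move=> [H1 c1] [H2 c2] /setXP [bad1 _] /setXP [bad2 _] eq12.
have eq_coeffs : dep_coeffs H1 = dep_coeffs H2.
  by rewrite -(dep_coeffs_reset_pivot H1 c1) eq12 dep_coeffs_reset_pivot.
have eq_pivot : pivot H1 = pivot H2 by rewrite /pivot eq_coeffs.
have eq_off s a b : [|| s != pivot H1, a != j | b != j] -> H1 s a b = H2 s a b.
  move=> off; have := congr1 (fun H : chan F n K => H s a b) eq12.
  by rewrite /reset_pivot /= -eq_pivot !set_diag_entry_off.
have -> : c1 = c2.
  have := congr1 (fun H : chan F n K => H (pivot H1) j j) eq12.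
  by rewrite /reset_pivot /= {3}eq_pivot !set_diag_entry_diag.
have eq_diag : H1 (pivot H1) j j = H2 (pivot H1) j j.
  apply: (eq_at_of_eq_lincomb (x := fun s => H1 s j j) (y := fun s => H2 s j j)
    (pivot_coeff_neq0 bad1)).
    by rewrite bad_diag_relation // eq_coeffs bad_diag_relation.
  by move=> s s_off; apply: eq_off; rewrite s_off.
congr pair; apply/ffunP => s; apply/matrixP => a b.
case: (s =P pivot H1) => [->|/eqP s_off]; last by rewrite eq_off ?s_off.
case: (a =P j) => [->|/eqP a_off]; last by rewrite eq_off ?a_off ?orbT.
by case: (b =P j) => [->|/eqP b_off]; last by rewrite eq_off ?b_off ?orbT.
Qed.

Lemma reset_pivot_in_dep_set H c : H \in bad_set -> c != 0 ->
  reset_pivot (H, c) \in dep_set.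
Proof.
rewrite !inE /int_dependent /reset_pivot h_int_mx_set_diag_entry.
move=> /andP [/forallP entries_nz /andP [-> _]] c_nz; rewrite andbT.
apply/forallP => s; apply/forallP => a; apply/forallP => b.
case: (boolP [|| s != pivot H, a != j | b != j]) => [off|].
  by rewrite set_diag_entry_off //; move/forallP: (entries_nz s) => /(_ a) /forallP.
by rewrite !negb_or !negbK => /and3P [/eqP -> /eqP -> /eqP ->]; rewrite set_diag_entry_diag.
Qed.

Lemma card_bad_set_mul_le : (#|bad_set| * #|F|.-1 <= #|dep_set|)%N.
Proof.
have -> : #|F|.-1 = #|[set c : F | c != 0]|.
  by rewrite -(cardC1 (0 : F)); apply: eq_card => c; rewrite inE.
rewrite -cardsX -(card_in_imset reset_pivot_inj); apply: subset_leq_card.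
apply/subsetP => y /imsetP [[H c] /setXP [bad_H]]; rewrite inE => c_nz ->.
exact: reset_pivot_in_dep_set.
Qed.

Lemma card_dep_set_gt0 : (1 <= K)%N -> (0 < #|dep_set|)%N.
Proof.
move=> K_ge1; apply/card_gt0P; exists [ffun _ => const_mx 1]; rewrite !inE.
apply/andP; split.
  by apply/forallP => s; apply/forallP => a; apply/forallP => b; rewrite ffunE mxE oner_neq0.
rewrite /int_dependent -row_leq_rank -ltnNge.
have -> : h_int_mx j [ffun _ => const_mx 1]
    = (const_mx 1 : 'cV[F]_K.+1) *m (const_mx 1 : 'rV[F]_n.-1).
  by apply/matrixP => s k; rewrite !mxE big_ord1 !mxE ffunE mxE mulr1.
apply: leq_ltn_trans (mxrankM_maxl _ _) _.
exact: leq_trans (rank_leq_col _) K_ge1.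
Qed.

Lemma cond_prob_recover_eq : (0 < #|dep_set|)%N ->
  cond_prob_recover F K j = 1 - #|bad_set|%:R / #|dep_set|%:R.
Proof.
move=> dep_gt0; rewrite /cond_prob_recover -/dep_set.
have -> : [set H in sample_space F n K | int_dependent j H && can_recover j H]
    = dep_set :\: bad_set.
  by apply/setP => H; rewrite !inE; case: [forall s, _]; case: int_dependent; case: can_recover.
have bad_sub : bad_set \subset dep_set.
  by apply/subsetP => H; rewrite !inE => /andP [-> /andP [-> _]].
rewrite cardsD (setIidPr bad_sub).
by rewrite natrB ?subset_leq_card // mulrBl divff ?pnatr_eq0 -?lt0n.
Qed.

End Receiver.

Theorem lemma3 (n K : nat) (j : 'I_n) :
  (2 <= n)%N -> (1 <= K)%N ->
  exists (C : rat) (q0 : nat),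
    forall F : finFieldType, (q0 <= #|F|)%N ->
      `|cond_prob_recover F K j - 1| <= C / (#|F|%:R).
Proof.
move=> _ K_ge1; exists 2%:R, 0%N => F _.
have dep_gt0 := card_dep_set_gt0 F j K_ge1.
rewrite cond_prob_recover_eq // addrAC subrr add0r normrN ger0_norm ?divr_ge0 ?ler0n //.
exact: ratio_le_two_over (card_finNzRing_gt1 F) (card_bad_set_mul_le F K j).
Qed.
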